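(* For every $m\ge1$, let $V^{(1)}_m$ and $V^{(2)}_m$ be the linear spans in $\mathbb{C}[\mathbb{S}_m]$ of all one-hyper-arc elements and of all two-hyper-arc elements, respectively, and let $R_m$ be the span of all $\alpha-\sigma_m^{-1}\alpha\sigma_m$, $\alpha\in\mathbb{S}_m$. Then $V^{(1)}_m+V^{(2)}_m=R_m+V^{(2)}_m$; i.e. modulo two-hyper-arc relations, the one-hyper-arc relations are equivalent to identifying each permutation with its cyclic shifts.
   Context: $\sigma_m=(1,2,\dots,m)\in\mathbb{S}_m$. Generalized Vassiliev elements: let $m\ge2$, $\gamma\in\mathbb{S}_{m-1}$, and $q\in[m-1]\cup\{*\}$. For $t\in\{0,1,\dots,m-1\}$ let $\alpha_t=\alpha_t(\gamma,q)\in\mathbb{S}_m$ be obtained as follows: place the points $1,\dots,m-1$ on a line in increasing order, insert a new point $x$ (the free leg) in the gap between $t$ and $t+1$ (before $1$ if $t=0$, after $m-1$ if $t=m-1$), and relabel the $m$ points by $1,\dots,m$ in order; the permutation acts as $\gamma$ on the old points, except that if $q\neq *$ then $q\mapsto x\mapsto\gamma(q)$, and if $q=*$ then $x$ is a fixed point. For a cycle $v$ of $\gamma$ put $E(\gamma,q,v)=\sum_{j\in v}(\alpha_{j-1}-\alpha_j)\in\mathbb{C}[\mathbb{S}_m]$. It is a one-hyper-arc element if $q\ne*$ and $q\in v$, and a two-hyper-arc element otherwise. *)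

From HB Require Import structures.
From mathcomp Require Import all_boot all_order all_algebra all_fingroup.
From mathcomp Require Import reals complex.
Set Implicit Arguments. Unset Strict Implicit. Unset Printing Implicit Defensive.
Import GRing.Theory Num.Theory.
Local Open Scope ring_scope.

(* The group algebra C[S_m] is modelled as the C-vector space of functions
   S_m -> C, with basis the indicators [perm_delta s]. We index by n = m - 1,
   so S_m = {perm 'I_n.+1} (points 0..m-1 stand for 1..m). *)

Definition GA (R : realType) (n : nat) := {ffun {perm 'I_n.+1} -> (R[i])^o}.

Definition pdelta (R : realType) (n : nat) (s : {perm 'I_n.+1}) : GA R n :=
  [ffun t => ((t == s)%:R : (R[i])^o)].

Definition sigma (n : nat) : {perm 'I_n.+1} := perm (@ordS_inj n.+1).

(* alpha_t(gamma, q) in S_m, gamma in S_{m-1}, q : option 'I_n (None = star),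
   t : 'I_n.+1 (the new point x receives 0-indexed label t, i.e. sits in the gap
   between old points t and t+1 in 1-indexed terms; old 0-indexed point i is
   relabelled lift t i = i + (t <= i)).
   lift_perm t t gamma fixes x and acts as gamma on the old points;
   composing first with the transposition (x, q) yields q |-> x |-> gamma q.
   (mathcomp product s1 * s2 applies s1 first.) *)
Definition alpha (n : nat) (gamma : {perm 'I_n}) (q : option 'I_n)
    (t : 'I_n.+1) : {perm 'I_n.+1} :=
  match q with
  | None => lift_perm t t gamma
  | Some q0 => (tperm t (lift t q0) * lift_perm t t gamma)%g
  end.

(* E(gamma, q, v) = sum_{j in v} (alpha_{j-1} - alpha_j), j 1-indexed;
   with 0-indexed i = j - 1 this is alpha_i - alpha_{i+1}. *)
Definition Eel (R : realType) (n : nat) (gamma : {perm 'I_n})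
    (q : option 'I_n) (v : {set 'I_n}) : GA R n :=
  \sum_(i in v) (pdelta R (alpha gamma q (inord i))
                 - pdelta R (alpha gamma q (inord i.+1))).

Definition one_hyper (n : nat) (q : option 'I_n) (v : {set 'I_n}) : bool :=
  if q is Some q0 then q0 \in v else false.

Definition V1 (R : realType) (n : nat) : {vspace GA R n} :=
  (\sum_(gamma : {perm 'I_n}) \sum_(q : option 'I_n)
     \sum_(v in porbits gamma | one_hyper q v) <[Eel R gamma q v]>)%VS.

Definition V2 (R : realType) (n : nat) : {vspace GA R n} :=
  (\sum_(gamma : {perm 'I_n}) \sum_(q : option 'I_n)
     \sum_(v in porbits gamma | ~~ one_hyper q v) <[Eel R gamma q v]>)%VS.

(* R_m: span of alpha - sigma^{-1} o alpha o sigma (function composition,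
   right to left); in mathcomp's left-to-right product this is
   sigma * alpha * sigma^-1. *)
Definition Rm (R : realType) (n : nat) : {vspace GA R n} :=
  (\sum_(a : {perm 'I_n.+1})
     <[pdelta R a - pdelta R ((sigma n * a * (sigma n)^-1)%g)]>)%VS.

(* Summing E(gamma, q, v) over all cycles v of gamma telescopes to
   alpha_0 - alpha_{m-1}, and alpha_{m-1} is the cyclic shift
   sigma alpha_0 sigma^-1 of alpha_0.  Every permutation is some alpha_0(gamma, q),
   so each generator of R_m is a sum of E's and lies in V1 + V2.  Conversely at
   most one cycle (the one containing q) gives a one-hyper-arc element, so each
   one-hyper-arc element is a generator of R_m minus two-hyper-arc elements. *)

From HB Require Import structures.
From mathcomp Require Import all_boot all_order all_algebra all_fingroup.
From mathcomp Require Import reals complex.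
Import GRing.Theory.
Local Open Scope ring_scope.

Lemma porbits_mem_eq {T : finType} (s : {perm T}) (A B : {set T}) (x : T) :
  A \in porbits s -> B \in porbits s -> x \in A -> x \in B -> A = B.
Proof.
move=> /imsetP[a _ ->] /imsetP[b _ ->].
by rewrite -!eq_porbit_mem => /eqP <- /eqP <-.
Qed.

Lemma big_porbits {T : finType} {V : nmodType} (s : {perm T}) (F : T -> V) :
  \sum_(A in porbits s) \sum_(x in A) F x = \sum_x F x.
Proof.
rewrite [RHS](partition_big (porbit s) (mem (porbits s))) => [|x _]; last exact: imset_f.
apply: eq_bigr => _ /imsetP[a _ ->].
by apply: eq_bigl => x; rewrite /= eq_porbit_mem.
Qed.

Lemma lift_perm_onto {n : nat} (i : 'I_n.+1) (s : 'S_n.+1) :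
  exists g : 'S_n, lift_perm i (s i) g = s.
Proof.
pose f k := odflt k (unlift (s i) (s (lift i k))).
have fK k : lift (s i) (f k) = s (lift i k).
  rewrite /f; have := neq_lift i k.
  by rewrite -(inj_eq (@perm_inj _ s)) => /unlift_some[k' -> ->].
have f_inj : injective f.
  by move=> k1 k2 /(congr1 (lift (s i))); rewrite !fK => /perm_inj /lift_inj.
exists (perm f_inj); apply/permP => k.
case: (unliftP i k) => [k'|] ->; last by rewrite lift_perm_id.
by rewrite lift_perm_lift permE fK.
Qed.

Section Alpha.
Variable n : nat.
Implicit Types (g : {perm 'I_n}) (q : option 'I_n) (t : 'I_n.+1).

Lemma alpha_lift g q t k :
  alpha g q t (lift t k) = if q == Some k then t else lift t (g k).
Proof.
case: q => [q0|] /=; last by rewrite lift_perm_lift.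
rewrite permM; have [<-|ne] := eqVneq q0 k.
  by rewrite eqxx tpermR lift_perm_id.
have /negbTE -> : Some q0 != Some k by apply: contra ne => /eqP[->].
by rewrite tpermD ?lift_perm_lift ?neq_lift // (inj_eq (@lift_inj _ t)).
Qed.

Lemma alpha_fresh g q t :
  alpha g q t t = if q is Some q0 then lift t (g q0) else t.
Proof.
case: q => [q0|] /=; last by rewrite lift_perm_id.
by rewrite permM tpermL lift_perm_lift.
Qed.

Lemma sigma_lift_max k : sigma n (lift ord_max k) = lift ord0 k.
Proof.
apply/val_inj; rewrite /sigma permE /= /bump leqNgt ltn_ord /=.
by rewrite add0n add1n modn_small // ltnS.
Qed.

Lemma sigma_max : sigma n ord_max = ord0.
Proof. by apply/val_inj; rewrite /sigma permE /= modnn. Qed.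

(* Inserting x last instead of first relabels every point one step along sigma. *)
Lemma alpha_max g q :
  alpha g q ord_max = (sigma n * alpha g q ord0 * (sigma n)^-1)%g.
Proof.
apply/permP => x; rewrite !permM; apply: (@perm_inj _ (sigma n)).
rewrite permKV; case: (unliftP ord_max x) => [k|] ->.
  rewrite !alpha_lift sigma_lift_max alpha_lift.
  by case: ifP => _; rewrite ?sigma_max ?sigma_lift_max.
rewrite sigma_max !alpha_fresh.
by case: q => [q0|]; rewrite ?sigma_lift_max ?sigma_max.
Qed.

(* Decompose a = tperm 0 (a^-1 0) * c with c 0 = 0. *)
Lemma alpha0_onto (a : {perm 'I_n.+1}) : exists g q, alpha g q ord0 = a.
Proof.
pose p := a^-1%g ord0; pose c := (tperm ord0 p * a)%g.
have c0 : c ord0 = ord0 by rewrite /c permM tpermL permKV.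
have [g] := lift_perm_onto ord0 c; rewrite c0 => Ec.
have Ea : a = (tperm ord0 p * c)%g by rewrite mulgA tperm2 mul1g.
case: (unliftP ord0 p) => [q0|] Ep.
  by exists g, (Some q0); rewrite /= Ec Ea Ep.
by exists g, None; rewrite /= Ec Ea Ep tperm1 mul1g.
Qed.

Variable R : realType.

Lemma sum_Eel_porbits g q :
  \sum_(v in porbits g) Eel R g q v =
  pdelta R (alpha g q ord0) - pdelta R (alpha g q ord_max).
Proof.
pose h (k : nat) := pdelta R (alpha g q (inord k)).
rewrite (big_porbits g (fun i : 'I_n => h i - h i.+1)).
have -> : (ord0 : 'I_n.+1) = inord 0 by apply/val_inj; rewrite /= inordK.
have -> : (ord_max : 'I_n.+1) = inord n by apply/val_inj; rewrite /= inordK.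
rewrite -(big_mkord xpredT (fun i => h i - h i.+1)) -[_ - _]opprB.
by rewrite -(telescope_sumr h (leq0n n)) -sumrN; apply: eq_bigr => i _; rewrite opprB.
Qed.

Lemma Eel_V1 {g q v} :
  v \in porbits g -> one_hyper q v -> Eel R g q v \in V1 R n.
Proof.
move=> vg qv; rewrite memvE; apply: (sumv_sup g) => //.
by apply: (sumv_sup q) => //; apply: (sumv_sup v); rewrite ?vg.
Qed.

Lemma Eel_V2 {g q v} :
  v \in porbits g -> ~~ one_hyper q v -> Eel R g q v \in V2 R n.
Proof.
move=> vg qv; rewrite memvE; apply: (sumv_sup g) => //.
by apply: (sumv_sup q) => //; apply: (sumv_sup v); rewrite ?vg.
Qed.

Lemma shift_diff_Rm (a : {perm 'I_n.+1}) :
  pdelta R a - pdelta R (sigma n * a * (sigma n)^-1)%g \in Rm R n.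
Proof. by rewrite memvE; apply: (sumv_sup a). Qed.

Lemma one_hyper_unique {g q v w} :
  v \in porbits g -> w \in porbits g -> one_hyper q v -> w != v ->
  ~~ one_hyper q w.
Proof.
case: q => [q0|] //= vg wg qv; apply: contraNN => qw.
by apply/eqP; apply: porbits_mem_eq wg vg qw qv.
Qed.

Lemma Eel_one_hyper_Rm_V2 g q v :
  v \in porbits g -> one_hyper q v -> Eel R g q v \in (Rm R n + V2 R n)%VS.
Proof.
move=> vg qv; have := sum_Eel_porbits g q.
rewrite (bigD1 v vg) /= => /(canRL (addrK _)) ->.
apply: memv_add; first by rewrite alpha_max shift_diff_Rm.
rewrite memvN; apply: memv_suml => w /andP[wg wv].
exact: Eel_V2 wg (one_hyper_unique vg wg qv wv).
Qed.

Lemma shift_diff_V1_V2 (a : {perm 'I_n.+1}) :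
  pdelta R a - pdelta R (sigma n * a * (sigma n)^-1)%g \in (V1 R n + V2 R n)%VS.
Proof.
have [g [q <-]] := alpha0_onto a.
rewrite -alpha_max -sum_Eel_porbits; apply: memv_suml => v vg.
have [qv|qv] := boolP (one_hyper q v).
  by apply: (subvP (addvSl _ _)); apply: Eel_V1.
by apply: (subvP (addvSr _ _)); apply: Eel_V2.
Qed.

End Alpha.

Theorem lemma2 (R : realType) (n : nat) :
  (V1 R n + V2 R n)%VS = (Rm R n + V2 R n)%VS.
Proof.
apply/eqP; rewrite eqEsubv !subv_add !addvSr !andbT; apply/andP; split.
  apply/subv_sumP => g _; apply/subv_sumP => q _.
  apply/subv_sumP => v /andP[vg qv]; rewrite -memvE.
  exact: Eel_one_hyper_Rm_V2.
by apply/subv_sumP => a _; rewrite -memvE; apply: shift_diff_V1_V2.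
Qed.
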